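(* Let $L\subseteq\{a\}^*$ and let $b>0$ be an integer such that: for every $z\in L$ with $|z|\ge b$ there exist integers $p\ge 0$, $q$ with $|z|=p+q$, $0<q\le b$, and $a^{p+iq}\in L$ for all $i\ge 0$. Then for every $z\in L$ with $|z|\ge b$ there exist integers $k,p,q_0,\dots,q_k,i_0,\dots,i_k$ such that $z=a^{\,p+i_0q_0+\cdots+i_kq_k}$, where $0\le k<b$, $0\le p<b$, $0<q_j\le b$ for all $j\in\{0,\dots,k\}$, the numbers $q_0,\dots,q_k$ are pairwise distinct, and $i_j>0$ for all $j\in\{0,\dots,k\}$. In particular $z$ belongs to the language $L^{\langle p,q_0,\ldots,q_k\rangle}=\{a^{\,p+i_0q_0+\cdots+i_kq_k}\mid i_0>0,\dots,i_k>0\}$.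
   Context: $a^m$ denotes the word consisting of $m$ copies of the letter $a$; $|z|$ is the length of $z$. *)

(* Unary alphabet {a}: letters are the single inhabitant of
   [unit]; words over {a} are [seq unit]; a language is a predicate on words. *)
From mathcomp Require Import all_boot.
Set Implicit Arguments. Unset Strict Implicit. Unset Printing Implicit Defensive.

Definition letter := unit.
Definition a : letter := tt.
Definition word := seq letter.

Definition apow (m : nat) : word := nseq m a.

Definition language := word -> Prop.

From mathcomp Require Import all_boot.

Set Implicit Arguments.
Unset Strict Implicit.
Unset Printing Implicit Defensive.

(* Pumping down (i = 0) strictly shortens a word of L of length at least b
   while staying in L, so by well-founded induction every length in L is a
   remainder r < b plus a list of removed steps, each in (0, b].  Grouping
   equal steps writes this list sum as a sum of pairwise distinct steps with
   positive multiplicities; there are at most b distinct steps, and at least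
   one as soon as the length is at least b. *)

Lemma apow_size (z : word) : z = apow (size z).
Proof. by elim: z => [|[] z IH] //=; rewrite -IH. Qed.

Section Pumping.

Variables (L : language) (b : nat).
Hypothesis hL : forall {z : word}, L z -> b <= size z ->
  exists p q : nat, size z = p + q /\ 0 < q <= b /\
    forall i : nat, L (apow (p + i * q)).

Lemma pumping_steps n : L (apow n) ->
  exists r (s : seq nat), [/\ r < b, all (fun q => 0 < q <= b) s & n = r + sumn s].
Proof.
elim/ltn_ind: n => n IH Ln; have [nb | bn] := ltnP n b.
  by exists n, [::]; rewrite addn0.
have := hL Ln; rewrite size_nseq => /(_ bn) [p [q [nE [qb Lpump]]]].
have Lp : L (apow p) by have := Lpump 0; rewrite addn0.
have pn : p < n by rewrite nE -{1}[p]addn0 ltn_add2l; case/andP: qb.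
have [r [s [rb sb pE]]] := IH p pn Lp.
exists r, (q :: s); split=> //=; first by rewrite qb sb.
by rewrite nE pE -addnA [sumn s + q]addnC.
Qed.

End Pumping.

Lemma sumn_undup_count (s : seq nat) :
  sumn s = \sum_(q <- undup s) count_mem q s * q.
Proof.
rewrite sumnE -big_undup_iterop_count; apply: eq_bigr => q _.
by rewrite Monoid.iteropE iter_addn_0 mulnC.
Qed.

Lemma sumn_distinct_steps (s : seq nat) : s != [::] ->
  exists k (q i : 'I_k.+1 -> nat),
    [/\ sumn s = \sum_(j < k.+1) i j * q j, k.+1 = size (undup s),
        injective q, forall j, q j \in s & forall j, 0 < i j].
Proof.
move=> s_nonnil; rewrite sumn_undup_count.
case def_u: (undup s) => [|x u]; first by rewrite (undup_nil def_u) in s_nonnil.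
have u_uniq : uniq (x :: u) by rewrite -def_u undup_uniq.
have q_in (j : 'I_(size u).+1) : nth x (x :: u) j \in s.
  by rewrite -mem_undup def_u mem_nth.
exists (size u), (fun j => nth x (x :: u) j), (fun j => count_mem (nth x (x :: u) j) s).
split=> //.
- by rewrite (big_nth x) big_mkord.
- by move=> j1 j2 /eqP; rewrite nth_uniq // => /eqP/val_inj.
- by move=> j; rewrite -has_count has_pred1.
Qed.

Lemma size_undup_bounded (b : nat) (s : seq nat) :
  all (fun q => 0 < q <= b) s -> size (undup s) <= b.
Proof.
move=> /allP sb; rewrite -[b](size_iota 1); apply: uniq_leq_size (undup_uniq s) _.
by move=> q; rewrite mem_undup mem_iota add1n => /sb.
Qed.

Theorem mainTheorem3 (L : language) (b : nat) (hb : 0 < b)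
  (hL : forall z : word, L z -> b <= size z ->
     exists p q : nat, size z = p + q /\ 0 < q <= b /\
       forall i : nat, L (apow (p + i * q))) :
  forall z : word, L z -> b <= size z ->
    exists (k p : nat) (q i : 'I_k.+1 -> nat),
      z = apow (p + \sum_(j < k.+1) i j * q j) /\
      k < b /\ p < b /\
      (forall j, 0 < q j <= b) /\
      injective q /\
      (forall j, 0 < i j).
Proof.
move=> z Lz zb; rewrite (apow_size z) in Lz.
have [r [s [rb /[dup] sb /allP s_range sizeE]]] := pumping_steps hL Lz.
have s_nonnil : s != [::].
  by apply: contraTneq zb => s_nil; rewrite -ltnNge sizeE s_nil addn0.
have [k [q [i [sumE sizeu q_inj q_in i_pos]]]] := sumn_distinct_steps s_nonnil.
exists k, r, q, i; split; first by rewrite {1}(apow_size z) sizeE sumE.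
split; first by rewrite -ltnS sizeu ltnS size_undup_bounded.
split=> //; split=> // j; exact: s_range.
Qed.
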